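(* For every computable endofunctor $d$ and every represented space $\mathbf{X}$, $\mathcal{O}^d(\mathbf{X})=\mathcal{O}^{\kappa^d}(\mathbf{X})$, i.e. $\mathcal{C}(\mathbf{X},d\mathbb{S})$ and $\mathcal{C}(\mathbf{X},\kappa^d\mathbb{S})$ are computably isomorphic via composition with $\kappa^d:d\mathbb{S}\to\kappa^d\mathbb{S}$.
   Context: Represented spaces $(X,\delta_X)$ with $\delta_X:\subseteq\{0,1\}^\mathbb{N}\to X$ partial surjective; computable/continuous maps via realizers; $\mathcal{C}(\mathbf{X},\mathbf{Y})$ the represented space of continuous maps. $\mathbb{S}=(\{\bot,\top\},\delta_\mathbb{S})$, $\delta_\mathbb{S}(0^\mathbb{N})=\bot$, $\delta_\mathbb{S}(p)=\top$ otherwise; $\mathcal{O}(\mathbf{Y})=\mathcal{C}(\mathbf{Y},\mathbb{S})$. A computable endofunctor is an endofunctor $d$ on represented spaces with continuous maps such that each $f\mapsto df$ is computable; $\mathcal{O}^d(\mathbf{X}):=\mathcal{C}(\mathbf{X},d\mathbb{S})$. $\kappa^d:d\mathbf{Y}\to\mathcal{C}(\mathcal{O}(\mathbf{Y}),d\mathbb{S})$, $\kappa^d(y)(U)=(dU)(y)$; $\kappa^d$ also denotes the computable endofunctor sending $\mathbf{Y}$ to the image $\kappa^d\mathbf{Y}$ of this map and a continuous $f:\mathbf{Y}\to\mathbf{Z}$ to $\varphi\mapsto(V\mapsto\varphi(V\circ f))$. *)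

From Stdlib Require Import Arith Lia List FunctionalExtensionality ProofIrrelevance.
Import ListNotations.
Set Implicit Arguments.

Inductive code : Type :=
| cZero : code
| cSucc : code
| cProj : nat -> code
| cComp : code -> list code -> code
| cPrim : code -> code -> code
| cMu   : code -> code.

Inductive eval : code -> list nat -> nat -> Prop :=
| eZero v : eval cZero v 0
| eSucc x v : eval cSucc (x :: v) (S x)
| eProj i v : i < length v -> eval (cProj i) v (nth i v 0)
| eComp f gs v ws y : evals gs v ws -> eval f ws y -> eval (cComp f gs) v y
| ePrim0 f g v y : eval f v y -> eval (cPrim f g) (0 :: v) y
| ePrimS f g n v r y :
    eval (cPrim f g) (n :: v) r -> eval g (n :: r :: v) y ->
    eval (cPrim f g) (S n :: v) y
| eMu f v n : eval f (n :: v) 0 ->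
    (forall m, m < n -> exists k, eval f (m :: v) (S k)) ->
    eval (cMu f) v n
with evals : list code -> list nat -> list nat -> Prop :=
| esNil v : evals [] v []
| esCons g gs v w ws : eval g v w -> evals gs v ws -> evals (g :: gs) v (w :: ws).

Definition computable_seq (p : nat -> bool) : Prop :=
  exists e : code, forall n, eval e [n] (if p n then 1 else 0).

Definition cpair (a b : nat) : nat := (a + b) * S (a + b) / 2 + b.
Fixpoint lcode (l : list bool) : nat :=
  match l with [] => 0 | b :: l' => S (cpair (if b then 1 else 0) (lcode l')) end.
Definition qcode (n : nat) (l : list bool) (b : bool) : nat :=
  cpair n (cpair (lcode l) (if b then 1 else 0)).

Definition prefix (q : nat -> bool) (k : nat) : list bool := map q (seq 0 k).

Definition fires (p : nat -> bool) (n : nat) (q : nat -> bool) (k : nat) : bool :=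
  p (qcode n (prefix q k) true) || p (qcode n (prefix q k) false).

(* F_p(q) = r : for each n, look for the least k such that p answers on
   (n, q|k); the answer bit is the n-th output bit. *)
Definition assoc_app (p q r : nat -> bool) : Prop :=
  forall n, exists k, fires p n q k = true /\
    (forall k', k' < k -> fires p n q k' = false) /\
    r n = p (qcode n (prefix q k) true).

Lemma assoc_app_det p q r r' : assoc_app p q r -> assoc_app p q r' -> r = r'.
Proof.
  intros H H'. apply functional_extensionality. intro n.
  destruct (H n) as [k [Hk [Hmin Hr]]]. destruct (H' n) as [k' [Hk' [Hmin' Hr']]].
  destruct (Nat.lt_trichotomy k k') as [Hlt|[Heq|Hlt]].
  - rewrite (Hmin' _ Hlt) in Hk. discriminate.
  - subst. congruence.
  - rewrite (Hmin _ Hlt) in Hk'. discriminate.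
Qed.

Record RepSpace : Type := {
  carrier :> Type;
  rep : (nat -> bool) -> carrier -> Prop;        (* rep p x  <->  delta(p) = x *)
  rep_fun : forall p x y, rep p x -> rep p y -> x = y;
  rep_surj : forall x, exists p, rep p x
}.

Definition realizes (X Y : RepSpace) (p : nat -> bool) (f : X -> Y) : Prop :=
  forall q x, rep X q x -> exists r, assoc_app p q r /\ rep Y r (f x).
Arguments realizes : clear implicits.

Definition continuous (X Y : RepSpace) (f : X -> Y) : Prop :=
  exists p, realizes X Y p f.

Definition computable (X Y : RepSpace) (f : X -> Y) : Prop :=
  exists p, computable_seq p /\ realizes X Y p f.

Definition cont (X Y : RepSpace) : Type := { f : X -> Y | continuous X Y f }.

(* the represented space C(X,Y) of continuous maps: names are associates *)
Lemma Cspace_fun (X Y : RepSpace) (p : nat -> bool) (f g : cont X Y) :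
  realizes X Y p (proj1_sig f) -> realizes X Y p (proj1_sig g) -> f = g.
Proof.
  intros Hf Hg. destruct f as [f cf], g as [g cg]; simpl in *.
  assert (E : f = g).
  { apply functional_extensionality. intro x.
    destruct (rep_surj X x) as [q Hq].
    destruct (Hf q x Hq) as [r [Hr Hrf]]. destruct (Hg q x Hq) as [r' [Hr' Hrg]].
    rewrite (assoc_app_det Hr Hr') in Hrf. exact (rep_fun Y _ _ _ Hrf Hrg). }
  subst g. f_equal. apply proof_irrelevance.
Qed.

Lemma Cspace_surj (X Y : RepSpace) (f : cont X Y) :
  exists p, realizes X Y p (proj1_sig f).
Proof. destruct f as [f [p Hp]]. exists p. exact Hp. Qed.

Definition Cspace (X Y : RepSpace) : RepSpace :=
  {| carrier := cont X Y;
     rep := fun p f => realizes X Y p (proj1_sig f);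
     rep_fun := @Cspace_fun X Y;
     rep_surj := @Cspace_surj X Y |}.

(* Sierpinski space: false = bottom, true = top; delta(0^N) = bottom *)
Definition sier_rep (p : nat -> bool) (b : bool) : Prop :=
  b = true <-> exists n, p n = true.

Lemma sier_fun p x y : sier_rep p x -> sier_rep p y -> x = y.
Proof.
  unfold sier_rep; intros Hx Hy.
  destruct x, y; try reflexivity.
  - exfalso. assert (true = true) as T by reflexivity.
    apply Hx in T. apply Hy in T. discriminate.
  - exfalso. assert (true = true) as T by reflexivity.
    apply Hy in T. apply Hx in T. discriminate.
Qed.

Lemma sier_surj x : exists p, sier_rep p x.
Proof.
  destruct x.
  - exists (fun _ => true). unfold sier_rep; split; intros; [exists 0|]; reflexivity.
  - exists (fun _ => false). unfold sier_rep; split.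
    + discriminate.
    + intros [n Hn]; discriminate.
Qed.

Definition Sier : RepSpace :=
  {| carrier := bool; rep := sier_rep; rep_fun := sier_fun; rep_surj := sier_surj |}.

Definition Ospace (Y : RepSpace) : RepSpace := Cspace Y Sier.

Lemma sub_fun (Z : RepSpace) (P : Z -> Prop) p (x y : {z : Z | P z}) :
  rep Z p (proj1_sig x) -> rep Z p (proj1_sig y) -> x = y.
Proof.
  intros Hx Hy. destruct x as [x px], y as [y py]; simpl in *.
  pose proof (rep_fun Z _ _ _ Hx Hy). subst y. f_equal. apply proof_irrelevance.
Qed.

Lemma sub_surj (Z : RepSpace) (P : Z -> Prop) (x : {z : Z | P z}) :
  exists p, rep Z p (proj1_sig x).
Proof. apply rep_surj. Qed.

Definition subspace (Z : RepSpace) (P : Z -> Prop) : RepSpace :=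
  {| carrier := {z : Z | P z};
     rep := fun p z => rep Z p (proj1_sig z);
     rep_fun := @sub_fun Z P;
     rep_surj := @sub_surj Z P |}.

Record CompEndofunctor : Type := {
  dobj : RepSpace -> RepSpace;
  dmap : forall X Y : RepSpace, cont X Y -> cont (dobj X) (dobj Y);
  dmap_id : forall (X : RepSpace) (i : cont X X),
      (forall x, proj1_sig i x = x) ->
      forall y, proj1_sig (dmap i) y = y;
  dmap_comp : forall (X Y Z : RepSpace) (f : cont X Y) (g : cont Y Z) (h : cont X Z),
      (forall x, proj1_sig h x = proj1_sig g (proj1_sig f x)) ->
      forall y, proj1_sig (dmap h) y = proj1_sig (dmap g) (proj1_sig (dmap f) y);
  dmap_computable : forall X Y : RepSpace,
      computable (Cspace X Y) (Cspace (dobj X) (dobj Y)) (@dmap X Y)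
}.

Definition Od (d : CompEndofunctor) (X : RepSpace) : RepSpace :=
  Cspace X (dobj d Sier).

(* kappa^d Y: the image of  y |-> (U |-> (dU)(y))  in C(O(Y), dS),
   as a subspace of C(O(Y), dS). *)
Definition kappa_obj (d : CompEndofunctor) (Y : RepSpace) : RepSpace :=
  @subspace (Cspace (Ospace Y) (dobj d Sier)) (fun phi : Cspace (Ospace Y) (dobj d Sier) =>
    exists y : dobj d Y,
      forall U : Ospace Y, proj1_sig phi U = proj1_sig (dmap d U) y).

(* Phi is composition with kappa : dS -> kappa S, where kappa y = (U |-> dU y); Psi is
   evaluation at U = id_S.  Since d id = id, kappa y (id) = y, so Psi o Phi = id, and
   Phi o Psi = id because every point of kappa S is of the form kappa y.  An associate of
   kappa y is obtained from a name of y by running the computable realizer of d on C(S, S)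
   against the name of U and applying the resulting associate of dU to the name of y.
   Phi and Psi are computable because these constructions transform associates by a
   finite-stage simulation of [assoc_app], which is primitive recursive; a query of the
   output associate is answered as soon as the simulation on the available prefix of the
   input associate answers it, which happens eventually by continuity. *)

From Stdlib Require Import Arith Lia List Bool FunctionalExtensionality ProofIrrelevance.
Import ListNotations.

(** * Recursive functions *)

Definition recursive (n : nat) (f : list nat -> nat) : Prop :=
  exists c, forall v, length v = n -> eval c v (f v).

Definition recursive_all (n : nat) (fs : list (list nat -> nat)) : Prop :=
  exists cs, forall v, length v = n -> evals cs v (map (fun f => f v) fs).

Lemma rec_ext n f g :
  recursive n f -> (forall v, length v = n -> f v = g v) -> recursive n g.
Proof. intros [c H] E. exists c. intros v Hv. rewrite <- E by exact Hv. auto. Qed.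

Lemma rec_zero n : recursive n (fun _ => 0).
Proof. exists cZero. intros. constructor. Qed.

Lemma rec_succ : recursive 1 (fun v => S (nth 0 v 0)).
Proof. exists cSucc. intros [|x [|]] H; simpl in H; try discriminate. constructor. Qed.

Lemma rec_nth n i : i < n -> recursive n (fun v => nth i v 0).
Proof. intros Hi. exists (cProj i). intros v Hv. constructor. lia. Qed.

Lemma rec_all_nil n : recursive_all n [].
Proof. exists []. intros. constructor. Qed.

Lemma rec_all_cons n f fs :
  recursive n f -> recursive_all n fs -> recursive_all n (f :: fs).
Proof. intros [c H] [cs Hs]. exists (c :: cs). intros v Hv. constructor; auto. Qed.

Lemma rec_comp n f gs : recursive (length gs) f -> recursive_all n gs ->
  recursive n (fun v => f (map (fun g => g v) gs)).
Proof.
  intros [c H] [cs Hs]. exists (cComp c cs). intros v Hv.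
  econstructor. apply Hs; auto. apply H. rewrite length_map; auto.
Qed.

Fixpoint natrec (b : nat) (st : nat -> nat -> nat) (x : nat) : nat :=
  match x with 0 => b | S x' => st x' (natrec b st x') end.

Lemma rec_prim n B St : recursive n B ->
  recursive (S (S n)) (fun v => St (nth 0 v 0) (nth 1 v 0) (skipn 2 v)) ->
  recursive (S n)
    (fun v => natrec (B (skipn 1 v)) (fun i a => St i a (skipn 1 v)) (nth 0 v 0)).
Proof.
  intros [b Hb] [s Hs]. exists (cPrim b s).
  intros [|x v] Hv; simpl in Hv; try discriminate. injection Hv as Hv. simpl.
  induction x; simpl.
  - constructor. auto.
  - econstructor. exact IHx. apply (Hs (x :: _ :: v)). simpl. lia.
Qed.

Lemma rec_all_nth_from k n :
  recursive_all (k + n) (map (fun i (v : list nat) => nth (k + i) v 0) (seq 0 n)).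
Proof.
  assert (H : forall j, j <= n -> recursive_all (k + n)
            (map (fun i (v : list nat) => nth (k + i) v 0) (seq (n - j) j))).
  { induction j; intros. apply rec_all_nil. simpl. apply rec_all_cons. apply rec_nth. lia.
    replace (S (n - S j)) with (n - j) by lia. apply IHj. lia. }
  specialize (H n (le_n _)). rewrite Nat.sub_diag in H. exact H.
Qed.

Lemma map_nth_from k n (w : list nat) : length w = k + n ->
  map (fun g => g w) (map (fun i (v : list nat) => nth (k + i) v 0) (seq 0 n)) = skipn k w.
Proof.
  intros Hw. rewrite map_map.
  assert (E : forall u : list nat, map (fun i => nth i u 0) (seq 0 (length u)) = u).
  { induction u; simpl; auto. f_equal. rewrite <- seq_shift, map_map. exact IHu. }
  rewrite <- (E (skipn k w)), length_skipn. replace (length w - k) with n by lia.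
  apply map_ext_in. intros i _. rewrite nth_skipn. f_equal; lia.
Qed.

Lemma rec_lift k n F : recursive n F -> recursive (k + n) (fun w => F (skipn k w)).
Proof.
  set (gs := map (fun i (v : list nat) => nth (k + i) v 0) (seq 0 n)).
  intros HF. assert (HL : length gs = n) by (unfold gs; rewrite length_map, length_seq; auto).
  rewrite <- HL in HF. eapply rec_ext. apply (rec_comp _ F gs HF), rec_all_nth_from.
  intros w Hw. unfold gs. rewrite map_nth_from; auto.
Qed.

Lemma rec_cons_env k n F G : recursive (S n) F -> recursive (k + n) G ->
  recursive (k + n) (fun w => F (G w :: skipn k w)).
Proof.
  set (gs := G :: map (fun i (v : list nat) => nth (k + i) v 0) (seq 0 n)).
  intros HF HG. assert (HL : length gs = S n) by (simpl; rewrite length_map, length_seq; auto).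
  rewrite <- HL in HF. eapply rec_ext.
  - apply (rec_comp _ F gs HF), rec_all_cons; auto. apply rec_all_nth_from.
  - intros w Hw. unfold gs. simpl. rewrite map_nth_from; auto.
Qed.

Lemma rec_natrec n (X B : list nat -> nat) (St : nat -> nat -> list nat -> nat) :
  recursive n X -> recursive n B ->
  recursive (S (S n)) (fun v => St (nth 0 v 0) (nth 1 v 0) (skipn 2 v)) ->
  recursive n (fun v => natrec (B v) (fun i a => St i a v) (X v)).
Proof. intros HX HB HS. exact (rec_cons_env 0 n _ X (rec_prim n B St HB HS) HX). Qed.

Lemma rec_comp1 n f g1 :
  recursive 1 (fun w => f (nth 0 w 0)) -> recursive n g1 -> recursive n (fun v => f (g1 v)).
Proof.
  intros Hf H1. apply (rec_comp n _ [g1] Hf).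
  apply rec_all_cons; auto. apply rec_all_nil.
Qed.

Lemma rec_comp2 n f g1 g2 : recursive 2 (fun w => f (nth 0 w 0) (nth 1 w 0)) ->
  recursive n g1 -> recursive n g2 -> recursive n (fun v => f (g1 v) (g2 v)).
Proof.
  intros Hf H1 H2. apply (rec_comp n _ [g1; g2] Hf).
  repeat apply rec_all_cons; auto. apply rec_all_nil.
Qed.

Lemma rec_comp3 n f g1 g2 g3 :
  recursive 3 (fun w => f (nth 0 w 0) (nth 1 w 0) (nth 2 w 0)) ->
  recursive n g1 -> recursive n g2 -> recursive n g3 ->
  recursive n (fun v => f (g1 v) (g2 v) (g3 v)).
Proof.
  intros Hf H1 H2 H3. apply (rec_comp n _ [g1; g2; g3] Hf).
  repeat apply rec_all_cons; auto. apply rec_all_nil.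
Qed.

Lemma rec_const n k : recursive n (fun _ => k).
Proof. induction k. apply rec_zero. apply (rec_comp1 n S); auto. apply rec_succ. Qed.

Ltac by_nth i :=
  eapply rec_ext; [apply (rec_nth _ i); lia | intros ? ?; rewrite ?nth_skipn; reflexivity].

Lemma rec_add : recursive 2 (fun w => nth 0 w 0 + nth 1 w 0).
Proof.
  eapply rec_ext.
  - apply (rec_natrec 2 (fun v => nth 1 v 0) (fun v => nth 0 v 0) (fun _ a _ => S a)).
    by_nth 1. by_nth 0. apply (rec_comp1 4 S). apply rec_succ. by_nth 1.
  - intros v _. simpl. induction (nth 1 v 0); simpl; lia.
Qed.

Lemma rec_pred : recursive 1 (fun w => pred (nth 0 w 0)).
Proof.
  eapply rec_ext.
  - apply (rec_natrec 1 (fun v => nth 0 v 0) (fun v => 0) (fun i _ _ => i)).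
    by_nth 0. apply rec_zero. by_nth 0.
  - intros v _. cbv beta. destruct (nth 0 v 0); reflexivity.
Qed.

Lemma rec_sub : recursive 2 (fun w => nth 0 w 0 - nth 1 w 0).
Proof.
  eapply rec_ext.
  - apply (rec_natrec 2 (fun v => nth 1 v 0) (fun v => nth 0 v 0) (fun _ a _ => pred a)).
    by_nth 1. by_nth 0. apply (rec_comp1 4 pred). apply rec_pred. by_nth 1.
  - intros v _. simpl. induction (nth 1 v 0); simpl; lia.
Qed.

Definition ifz (c a b : nat) : nat := match c with 0 => a | _ => b end.

Lemma rec_ifz : recursive 3 (fun w => ifz (nth 0 w 0) (nth 1 w 0) (nth 2 w 0)).
Proof.
  eapply rec_ext.
  - apply (rec_natrec 3 (fun v => nth 0 v 0) (fun v => nth 1 v 0) (fun _ _ v => nth 2 v 0)).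
    by_nth 0. by_nth 1. by_nth 4.
  - intros v _. cbv beta. destruct (nth 0 v 0); reflexivity.
Qed.

Lemma rec_S n f : recursive n f -> recursive n (fun v => S (f v)).
Proof. intros. apply (rec_comp1 n S); auto. apply rec_succ. Qed.

Lemma rec_addf n f g : recursive n f -> recursive n g -> recursive n (fun v => f v + g v).
Proof. intros. apply (rec_comp2 n Nat.add); auto. apply rec_add. Qed.

Lemma rec_subf n f g : recursive n f -> recursive n g -> recursive n (fun v => f v - g v).
Proof. intros. apply (rec_comp2 n Nat.sub); auto. apply rec_sub. Qed.

Lemma rec_ifzf n c f g : recursive n c -> recursive n f -> recursive n g ->
  recursive n (fun v => ifz (c v) (f v) (g v)).
Proof. intros. apply (rec_comp3 n ifz); auto. apply rec_ifz. Qed.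

Definition b2n (b : bool) : nat := if b then 1 else 0.

Lemma rec_eqb n f g : recursive n f -> recursive n g ->
  recursive n (fun v => b2n (f v =? g v)).
Proof.
  intros Hf Hg. eapply rec_ext.
  - apply (rec_ifzf n (fun v => (f v - g v) + (g v - f v)) (fun _ => 1) (fun _ => 0)).
    apply rec_addf; apply rec_subf; auto. apply rec_const. apply rec_const.
  - intros v _. unfold ifz.
    destruct (f v - g v + (g v - f v)) eqn:E; destruct (Nat.eqb_spec (f v) (g v)); simpl; lia.
Qed.

Lemma rec_ltb n f g : recursive n f -> recursive n g ->
  recursive n (fun v => b2n (f v <? g v)).
Proof.
  intros Hf Hg. eapply rec_ext.
  - apply (rec_ifzf n (fun v => S (f v) - g v) (fun _ => 1) (fun _ => 0)).
    apply rec_subf; auto. apply rec_S; auto. apply rec_const. apply rec_const.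
  - intros v _. unfold ifz.
    destruct (S (f v) - g v) eqn:E; destruct (Nat.ltb_spec (f v) (g v)); simpl; lia.
Qed.

Lemma rec_if n (c : list nat -> bool) f g :
  recursive n (fun v => b2n (c v)) -> recursive n f -> recursive n g ->
  recursive n (fun v => if c v then f v else g v).
Proof.
  intros Hc Hf Hg. eapply rec_ext. apply (rec_ifzf n _ g f Hc); auto.
  intros v _. cbv beta. destruct (c v); reflexivity.
Qed.

Lemma rec_andb n (c c' : list nat -> bool) :
  recursive n (fun v => b2n (c v)) -> recursive n (fun v => b2n (c' v)) ->
  recursive n (fun v => b2n (c v && c' v)).
Proof.
  intros Hc Hc'. eapply rec_ext. apply (rec_if n c (fun v => b2n (c' v)) (fun _ => 0)); auto.
  apply rec_const. intros v _. cbv beta. destruct (c v); reflexivity.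
Qed.

Lemma rec_beqb n (c c' : list nat -> bool) :
  recursive n (fun v => b2n (c v)) -> recursive n (fun v => b2n (c' v)) ->
  recursive n (fun v => b2n (Bool.eqb (c v) (c' v))).
Proof.
  intros Hc Hc'. eapply rec_ext. apply (rec_eqb n _ _ Hc Hc').
  intros v _. cbv beta. destruct (c v), (c' v); reflexivity.
Qed.

Lemma rec_eqb1 n f : recursive n f -> recursive n (fun v => b2n (f v =? 1)).
Proof. intros. apply rec_eqb; auto. apply rec_const. Qed.

(* The least [x < b] with [f x = true], or [b] if there is none. *)
Definition bsearch (f : nat -> bool) (b : nat) : nat :=
  natrec 0 (fun x a => if a <? x then a else if f x then x else S x) b.

Lemma bsearch_spec f b :
  (bsearch f b < b /\ f (bsearch f b) = true /\ forall y, y < bsearch f b -> f y = false) \/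
  (bsearch f b = b /\ forall y, y < b -> f y = false).
Proof.
  induction b as [|b IH].
  - right. split. reflexivity. intros; lia.
  - unfold bsearch in *. simpl. destruct IH as [[H1 [H2 H3]]|[H1 H2]].
    + destruct (Nat.ltb_spec (natrec 0 (fun x a => if a <? x then a else if f x then x else S x) b) b);
        [left; auto | lia].
    + rewrite H1, Nat.ltb_irrefl. destruct (f b) eqn:E.
      * left. split; auto.
      * right. split; auto. intros y Hy.
        destruct (Nat.eq_dec y b); [subst; auto | apply H2; lia].
Qed.

Lemma bsearch_first (P : nat -> bool) k : P k = true ->
  exists j, P j = true /\ forall i, i < j -> P i = false.
Proof.
  intros Hk. destruct (bsearch_spec P (S k)) as [[_ [H2 H3]]|[_ H2]].
  - eauto.
  - rewrite H2 in Hk by lia. discriminate.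
Qed.

Lemma rec_bsearch n (Bd : list nat -> nat) (f : nat -> list nat -> bool) :
  recursive (S n) (fun w => b2n (f (nth 0 w 0) (skipn 1 w))) -> recursive n Bd ->
  recursive n (fun v => bsearch (fun x => f x v) (Bd v)).
Proof.
  intros Hf HB. unfold bsearch.
  apply (rec_natrec n Bd (fun _ => 0) (fun x a v => if a <? x then a else if f x v then x else S x));
    auto. apply rec_const.
  apply rec_if. apply rec_ltb; [by_nth 1 | by_nth 0].
  by_nth 1. apply rec_if.
  - eapply rec_ext. apply (rec_cons_env 2 n _ (fun w => nth 0 w 0) Hf). by_nth 0.
    reflexivity.
  - by_nth 0.
  - apply rec_S. by_nth 0.
Qed.

(** * Pairing and codes of bit lists *)

Definition tri (t : nat) : nat := natrec 0 (fun i a => a + S i) t.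

Lemma tri_S t : tri (S t) = tri t + S t.
Proof. reflexivity. Qed.

Lemma tri_double t : t * S t = 2 * tri t.
Proof. induction t; [reflexivity|]. rewrite tri_S. nia. Qed.

Lemma tri_mono s t : s <= t -> tri s <= tri t.
Proof. induction 1; [|rewrite tri_S]; lia. Qed.

Lemma tri_ge t : t <= tri t.
Proof. induction t; [|rewrite tri_S]; simpl; lia. Qed.

Lemma cpair_tri a b : cpair a b = tri (a + b) + b.
Proof. unfold cpair. rewrite tri_double, Nat.mul_comm, Nat.div_mul by lia. reflexivity. Qed.

(* [unpair_diag N] is the diagonal [a + b] of [N = cpair a b]. *)
Definition unpair_diag (N : nat) : nat := bsearch (fun t => N <? tri (S t)) (S N).
Definition unpair2 (N : nat) : nat := N - tri (unpair_diag N).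
Definition unpair1 (N : nat) : nat := unpair_diag N - unpair2 N.

Lemma unpair_diag_spec N : tri (unpair_diag N) <= N < tri (S (unpair_diag N)).
Proof.
  unfold unpair_diag.
  destruct (bsearch_spec (fun t => N <? tri (S t)) (S N)) as [[_ [H2 H3]]|[_ H2]].
  - apply Nat.ltb_lt in H2. split; auto.
    remember (bsearch (fun t => N <? tri (S t)) (S N)) as s.
    destruct s as [|s]; [apply Nat.le_0_l|].
    specialize (H3 s (Nat.lt_succ_diag_r s)). apply Nat.ltb_ge in H3. auto.
  - specialize (H2 N (Nat.lt_succ_diag_r N)). apply Nat.ltb_ge in H2.
    pose proof (tri_ge (S N)). lia.
Qed.

Lemma tri_interval_unique s t N :
  tri s <= N < tri (S s) -> tri t <= N < tri (S t) -> s = t.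
Proof.
  intros. destruct (Nat.lt_trichotomy s t) as [H1|[H1|H1]]; auto.
  - pose proof (tri_mono (S s) t H1). lia.
  - pose proof (tri_mono (S t) s H1). lia.
Qed.

Lemma unpair_cpair a b : unpair1 (cpair a b) = a /\ unpair2 (cpair a b) = b.
Proof.
  rewrite cpair_tri.
  assert (E : unpair_diag (tri (a + b) + b) = a + b).
  { apply (tri_interval_unique _ _ (tri (a + b) + b)). apply unpair_diag_spec. rewrite tri_S. lia. }
  unfold unpair1, unpair2. rewrite E. lia.
Qed.

Lemma unpair1_cpair a b : unpair1 (cpair a b) = a.
Proof. apply unpair_cpair. Qed.

Lemma unpair2_cpair a b : unpair2 (cpair a b) = b.
Proof. apply unpair_cpair. Qed.

Lemma rec_tri n f : recursive n f -> recursive n (fun v => tri (f v)).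
Proof.
  intros Hf. apply (rec_natrec n f (fun _ => 0) (fun i a _ => a + S i)); auto.
  apply rec_const. apply rec_addf. by_nth 1. apply rec_S. by_nth 0.
Qed.

Lemma rec_cpair n f g : recursive n f -> recursive n g -> recursive n (fun v => cpair (f v) (g v)).
Proof.
  intros Hf Hg. eapply rec_ext. 2:{ intros. symmetry. apply cpair_tri. }
  apply rec_addf; auto. apply rec_tri. apply rec_addf; auto.
Qed.

Lemma rec_unpair_diag n f : recursive n f -> recursive n (fun v => unpair_diag (f v)).
Proof.
  intros Hf. apply (rec_bsearch n (fun v => S (f v)) (fun t v => f v <? tri (S t))).
  - apply rec_ltb. apply (rec_lift 1 n f Hf). apply rec_tri. apply rec_S. by_nth 0.
  - apply rec_S; auto.
Qed.

Lemma rec_unpair2 n f : recursive n f -> recursive n (fun v => unpair2 (f v)).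
Proof. intros Hf. apply rec_subf; auto. apply rec_tri, rec_unpair_diag; auto. Qed.

Lemma rec_unpair1 n f : recursive n f -> recursive n (fun v => unpair1 (f v)).
Proof. intros Hf. apply rec_subf. apply rec_unpair_diag; auto. apply rec_unpair2; auto. Qed.

Definition lcode_tl (c : nat) : nat := unpair2 (pred c).
Definition lcode_hd (c : nat) : nat := unpair1 (pred c).
Definition lcode_skip (c k : nat) : nat := natrec c (fun _ a => lcode_tl a) k.
Definition lcode_length (c : nat) : nat := bsearch (fun k => lcode_skip c k =? 0) (S c).
Definition lcode_nth (c i : nat) : nat := lcode_hd (lcode_skip c i).
Definition ldecode (c : nat) : list bool :=
  map (fun i => lcode_nth c i =? 1) (seq 0 (lcode_length c)).

Lemma lcode_tl_lcode l : lcode_tl (lcode l) = lcode (tl l).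
Proof. destruct l; [reflexivity|]. apply unpair2_cpair. Qed.

Lemma lcode_hd_cons b l : lcode_hd (lcode (b :: l)) = b2n b.
Proof. unfold lcode_hd. simpl. rewrite unpair1_cpair. destruct b; reflexivity. Qed.

Lemma lcode_skip_lcode l k : lcode_skip (lcode l) k = lcode (skipn k l).
Proof.
  induction k as [|k IH]; [reflexivity|].
  change (lcode_tl (lcode_skip (lcode l) k) = lcode (skipn (S k) l)).
  rewrite IH, lcode_tl_lcode. f_equal.
  change (S k) with (1 + k). rewrite <- skipn_skipn. destruct (skipn k l); reflexivity.
Qed.

Lemma length_le_lcode l : length l <= lcode l.
Proof. induction l; simpl. lia. rewrite cpair_tri. lia. Qed.

Lemma lcode_eq0 l : lcode l = 0 <-> l = [].
Proof. destruct l; simpl; split; intro; congruence. Qed.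

Lemma lcode_length_lcode l : lcode_length (lcode l) = length l.
Proof.
  assert (Hend : lcode_skip (lcode l) (length l) =? 0 = true).
  { apply Nat.eqb_eq. rewrite lcode_skip_lcode, lcode_eq0. apply skipn_all. }
  unfold lcode_length.
  destruct (bsearch_spec (fun k => lcode_skip (lcode l) k =? 0) (S (lcode l)))
    as [[H1 [H2 H3]]|[H1 H2]].
  - apply Nat.eqb_eq in H2. rewrite lcode_skip_lcode, lcode_eq0 in H2.
    set (s := bsearch _ _) in *.
    assert (Hs : length (skipn s l) = 0) by (rewrite H2; reflexivity).
    rewrite length_skipn in Hs.
    destruct (Nat.eq_dec s (length l)) as [|Hne]; auto.
    rewrite H3 in Hend by lia. discriminate.
  - pose proof (length_le_lcode l). rewrite H2 in Hend by lia. discriminate.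
Qed.

Lemma lcode_nth_lcode l i : i < length l -> lcode_nth (lcode l) i = b2n (nth i l false).
Proof.
  unfold lcode_nth. rewrite lcode_skip_lcode.
  revert i. induction l; simpl; intros i Hi. lia.
  destruct i. apply lcode_hd_cons. apply IHl. lia.
Qed.

Lemma length_ldecode c : length (ldecode c) = lcode_length c.
Proof. unfold ldecode. rewrite length_map, length_seq. auto. Qed.

Lemma nth_error_ldecode c i :
  nth_error (ldecode c) i = if i <? lcode_length c then Some (lcode_nth c i =? 1) else None.
Proof.
  unfold ldecode. rewrite nth_error_map, nth_error_seq.
  destruct (i <? lcode_length c); reflexivity.
Qed.

Lemma ldecode_lcode l : ldecode (lcode l) = l.
Proof.
  apply nth_error_ext. intros i. rewrite nth_error_ldecode, lcode_length_lcode.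
  destruct (Nat.ltb_spec i (length l)).
  - rewrite lcode_nth_lcode, (nth_error_nth' _ false) by auto.
    destruct (nth i l false); reflexivity.
  - symmetry. apply nth_error_None. auto.
Qed.

Lemma rec_lcode_tl n f : recursive n f -> recursive n (fun v => lcode_tl (f v)).
Proof. intros. apply rec_unpair2, (rec_comp1 n pred); auto. apply rec_pred. Qed.

Lemma rec_lcode_hd n f : recursive n f -> recursive n (fun v => lcode_hd (f v)).
Proof. intros. apply rec_unpair1, (rec_comp1 n pred); auto. apply rec_pred. Qed.

Lemma rec_lcode_skip n f g :
  recursive n f -> recursive n g -> recursive n (fun v => lcode_skip (f v) (g v)).
Proof.
  intros. apply (rec_natrec n g f (fun _ a _ => lcode_tl a)); auto.
  apply rec_lcode_tl. by_nth 1.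
Qed.

Lemma rec_lcode_length n f : recursive n f -> recursive n (fun v => lcode_length (f v)).
Proof.
  intros Hf. apply (rec_bsearch n (fun v => S (f v)) (fun k v => lcode_skip (f v) k =? 0)).
  - apply rec_eqb. apply rec_lcode_skip. apply (rec_lift 1 n f Hf). by_nth 0. apply rec_const.
  - apply rec_S; auto.
Qed.

Lemma rec_lcode_nth n f g :
  recursive n f -> recursive n g -> recursive n (fun v => lcode_nth (f v) (g v)).
Proof. intros. apply rec_lcode_hd, rec_lcode_skip; auto. Qed.

Lemma length_prefix (q : nat -> bool) k : length (prefix q k) = k.
Proof. unfold prefix. rewrite length_map, length_seq. auto. Qed.

Lemma nth_error_prefix (q : nat -> bool) k i :
  nth_error (prefix q k) i = if i <? k then Some (q i) else None.
Proof. unfold prefix. rewrite nth_error_map, nth_error_seq. destruct (i <? k); reflexivity. Qed.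

(** * Finite-stage evaluation of associates *)

(* A bit of a partially available stream: [None] when it depends on information not
   available yet, [Some None] when the finite-stage computation gave up, [Some (Some b)]
   for a definite bit [b]. *)
Definition answer := option (option bool).

Definition refines (a a' : nat -> answer) := forall i x, a i = Some x -> a' i = Some x.

Definition sound (a : nat -> answer) (f : nat -> bool) := forall i x, a i = Some (Some x) -> x = f i.

(* Reads the bits [k - j, ..., k - 1] of [r]. *)
Fixpoint read_prefix_from (r : nat -> answer) (k j : nat) : option (option (list bool)) :=
  match j with
  | 0 => Some (Some [])
  | S j' =>
    match read_prefix_from r k j' with
    | None => None
    | Some None => Some None
    | Some (Some l) =>
      match r (k - S j') with
      | None => None
      | Some None => Some None
      | Some (Some b) => Some (Some (b :: l))
      end
    end
  end.

Definition read_prefix r k := read_prefix_from r k k.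

Lemma read_prefix_from_refines r r' k j x :
  refines r r' -> read_prefix_from r k j = Some x -> read_prefix_from r' k j = Some x.
Proof.
  intros Hr. revert x. induction j; intros x H; simpl in *; auto.
  destruct (read_prefix_from r k j) as [[l|]|] eqn:E; try discriminate;
    rewrite (IHj _ eq_refl); auto.
  destruct (r (k - S j)) as [[b|]|] eqn:E2; try discriminate; rewrite (Hr _ _ E2); auto.
Qed.

Lemma read_prefix_total r k (f : nat -> bool) :
  (forall i, i < k -> r i = Some (Some (f i))) -> read_prefix r k = Some (Some (prefix f k)).
Proof.
  intros Hr. unfold read_prefix, prefix.
  assert (H : forall j, j <= k -> read_prefix_from r k j = Some (Some (map f (seq (k - j) j)))).
  { induction j; intros Hj; simpl. reflexivity.
    rewrite IHj, Hr by lia. replace (S (k - S j)) with (k - j) by lia. reflexivity. }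
  rewrite H, Nat.sub_diag; auto.
Qed.

Lemma read_prefix_from_spec r k j l : j <= k -> read_prefix_from r k j = Some (Some l) ->
  length l = j /\ forall i, i < j -> r (k - j + i) = Some (Some (nth i l false)).
Proof.
  revert l. induction j; intros l Hj H; simpl in *.
  - inversion H; subst. split; auto. intros; lia.
  - destruct (read_prefix_from r k j) as [[l'|]|] eqn:E; try discriminate.
    destruct (r (k - S j)) as [[b|]|] eqn:E2; try discriminate.
    inversion H; subst. destruct (IHj l' ltac:(lia) eq_refl) as [H1 H2].
    split. simpl; auto. intros [|i] Hi.
    + rewrite Nat.add_0_r. auto.
    + simpl. replace (k - S j + S i) with (k - j + i) by lia. apply H2. lia.
Qed.

Lemma read_prefix_sound r f k l :
  sound r f -> read_prefix r k = Some (Some l) -> l = prefix f k.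
Proof.
  intros Hs H. destruct (read_prefix_from_spec r k k l (le_n _) H) as [H1 H2].
  apply nth_error_ext. intros i. rewrite nth_error_prefix.
  destruct (Nat.ltb_spec i k).
  - rewrite (nth_error_nth' _ false) by lia. f_equal. apply Hs.
    specialize (H2 i H0). rewrite Nat.sub_diag in H2. exact H2.
  - apply nth_error_None. lia.
Qed.

Lemma read_prefix_from_defined r k j : (forall i, r i <> None) -> read_prefix_from r k j <> None.
Proof.
  intros Hr. induction j; simpl. discriminate.
  destruct (read_prefix_from r k j) as [[l|]|]; try congruence.
  specialize (Hr (k - S j)). destruct (r (k - S j)) as [[b|]|]; congruence.
Qed.

(* [assoc_eval a r n K] runs the search in [assoc_app] for output bit [n] over the stages
   [k < K], reading the associate from [a] and the input from [r]. *)
Fixpoint assoc_eval_from (a r : nat -> answer) (n K j : nat) : answer :=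
  match j with
  | 0 => Some None
  | S j' =>
    match read_prefix r (K - S j') with
    | None => None
    | Some None => Some None
    | Some (Some l) =>
      match a (qcode n l true) with
      | None => None
      | Some None => Some None
      | Some (Some x1) =>
        match a (qcode n l false) with
        | None => None
        | Some None => Some None
        | Some (Some x2) => if x1 || x2 then Some (Some x1) else assoc_eval_from a r n K j'
        end
      end
    end
  end.

Definition assoc_eval a r n K := assoc_eval_from a r n K K.

Lemma assoc_eval_from_refines a a' r r' n K j x : refines a a' -> refines r r' ->
  assoc_eval_from a r n K j = Some x -> assoc_eval_from a' r' n K j = Some x.
Proof.
  intros Ha Hr. revert x. induction j; intros x H; simpl in *; auto.
  unfold read_prefix in *.
  destruct (read_prefix_from r (K - S j) (K - S j)) as [[l|]|] eqn:E; try discriminate;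
    rewrite (read_prefix_from_refines _ _ _ _ _ Hr E); auto.
  destruct (a (qcode n l true)) as [[x1|]|] eqn:E1; try discriminate; rewrite (Ha _ _ E1); auto.
  destruct (a (qcode n l false)) as [[x2|]|] eqn:E2; try discriminate; rewrite (Ha _ _ E2); auto.
  destruct (x1 || x2); auto.
Qed.

Lemma assoc_eval_from_defined a r n K j :
  (forall i, a i <> None) -> (forall i, r i <> None) -> assoc_eval_from a r n K j <> None.
Proof.
  intros Ha Hr. induction j; simpl. discriminate.
  pose proof (read_prefix_from_defined r (K - S j) (K - S j) Hr). unfold read_prefix.
  destruct (read_prefix_from r _ _) as [[l|]|]; try congruence.
  pose proof (Ha (qcode n l true)). destruct (a (qcode n l true)) as [[x1|]|]; try congruence.
  pose proof (Ha (qcode n l false)). destruct (a (qcode n l false)) as [[x2|]|]; try congruence.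
  destruct (x1 || x2); congruence.
Qed.

Definition first_fire (p q : nat -> bool) n k :=
  fires p n q k = true /\ forall k', k' < k -> fires p n q k' = false.

Lemma assoc_app_first_fire p q s n :
  assoc_app p q s -> exists k, first_fire p q n k /\ s n = p (qcode n (prefix q k) true).
Proof. intros H. destruct (H n) as [k [H1 [H2 H3]]]. exists k. repeat split; auto. Qed.

Lemma first_fire_output p q s n k :
  assoc_app p q s -> first_fire p q n k -> s n = p (qcode n (prefix q k) true).
Proof.
  intros H [Hf Hm]. destruct (H n) as [k0 [H1 [H2 H3]]].
  destruct (Nat.lt_trichotomy k k0) as [Hl|[He|Hl]].
  - rewrite H2 in Hf by auto. discriminate.
  - subst; auto.
  - rewrite Hm in H1 by auto. discriminate.
Qed.

Lemma assoc_eval_from_sound a r p q n K j v : sound a p -> sound r q -> j <= K ->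
  assoc_eval_from a r n K j = Some (Some v) ->
  exists k, K - j <= k < K /\ fires p n q k = true /\ v = p (qcode n (prefix q k) true) /\
    forall k', K - j <= k' < k -> fires p n q k' = false.
Proof.
  intros Ha Hr. induction j; intros Hj H; simpl in H. discriminate.
  destruct (read_prefix r (K - S j)) as [[l|]|] eqn:E; try discriminate.
  apply (read_prefix_sound _ q) in E; auto. subst l.
  destruct (a (qcode n (prefix q (K - S j)) true)) as [[x1|]|] eqn:E1; try discriminate.
  destruct (a (qcode n (prefix q (K - S j)) false)) as [[x2|]|] eqn:E2; try discriminate.
  apply Ha in E1. apply Ha in E2.
  assert (Hf : fires p n q (K - S j) = x1 || x2) by (unfold fires; subst; reflexivity).
  destruct (x1 || x2).
  - inversion H; subst. exists (K - S j). repeat split; auto; lia.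
  - destruct (IHj ltac:(lia) H) as [k [Hk1 [Hk2 [Hk3 Hk4]]]].
    exists k. repeat split; auto; try lia.
    intros k' Hk'. destruct (Nat.eq_dec k' (K - S j)); [subst; auto | apply Hk4; lia].
Qed.

Lemma assoc_eval_sound a r p q s n K v : sound a p -> sound r q -> assoc_app p q s ->
  assoc_eval a r n K = Some (Some v) -> v = s n.
Proof.
  intros Ha Hr Hs H.
  destruct (assoc_eval_from_sound a r p q n K K v Ha Hr (le_n _) H) as [k [_ [Hf [-> Hm]]]].
  symmetry. apply (first_fire_output _ _ _ _ _ Hs). split; auto.
  intros; apply Hm; lia.
Qed.

Lemma assoc_eval_complete a r p q s n K kf : assoc_app p q s -> first_fire p q n kf -> kf < K ->
  (forall i, i < kf -> r i = Some (Some (q i))) ->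
  (forall k c, k <= kf -> a (qcode n (prefix q k) c) = Some (Some (p (qcode n (prefix q k) c)))) ->
  assoc_eval a r n K = Some (Some (s n)).
Proof.
  intros Hs Hfirst HK Hr Ha. rewrite (first_fire_output _ _ _ _ _ Hs Hfirst).
  destruct Hfirst as [Hf Hm].
  assert (H : forall j, j <= K -> K - j <= kf ->
            assoc_eval_from a r n K j = Some (Some (p (qcode n (prefix q kf) true)))).
  { induction j; intros Hj1 Hj2. lia. simpl.
    rewrite (read_prefix_total r (K - S j) q) by (intros; apply Hr; lia).
    rewrite !Ha by lia. change (_ || _) with (fires p n q (K - S j)).
    destruct (Nat.eq_dec (K - S j) kf) as [->|].
    - rewrite Hf. reflexivity.
    - rewrite Hm by lia. apply IHj; lia. }
  apply H; lia.
Qed.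

Definition data_continuous {T} (F : (nat -> answer) -> T) :=
  forall d, exists B, forall d', (forall i, i < B -> d' i = d i) -> F d' = F d.

Lemma data_continuous_const {T} (t : T) : data_continuous (fun _ => t).
Proof. intros d. exists 0. auto. Qed.

Lemma data_continuous_at i : data_continuous (fun d : nat -> answer => d i).
Proof. intros d. exists (S i). intros d' H. apply H. lia. Qed.

Lemma data_continuous_match {A U} (F : (nat -> answer) -> option (option A))
    (N1 N2 : (nat -> answer) -> U) (G : A -> (nat -> answer) -> U) :
  data_continuous F -> data_continuous N1 -> data_continuous N2 ->
  (forall x, data_continuous (G x)) ->
  data_continuous (fun d => match F d with
                            | None => N1 d | Some None => N2 d | Some (Some x) => G x d end).
Proof.
  intros HF H1 H2 HG d. destruct (HF d) as [B HB].
  destruct (F d) as [[x|]|] eqn:E; [destruct (HG x d) as [B' HB'] | destruct (H2 d) as [B' HB']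
    | destruct (H1 d) as [B' HB']];
  exists (max B B'); intros d' H; rewrite HB by (intros; apply H; lia);
  apply HB'; intros; apply H; lia.
Qed.

Ltac data_continuous_tac :=
  repeat first [ apply data_continuous_const | apply data_continuous_match
               | apply data_continuous_at | match goal with |- forall _, _ => intro end ].

Lemma read_prefix_from_continuous (Rr : (nat -> answer) -> nat -> answer) k j :
  (forall i, data_continuous (fun d => Rr d i)) ->
  data_continuous (fun d => read_prefix_from (Rr d) k j).
Proof. intros HR. induction j; simpl; data_continuous_tac; auto. Qed.

Lemma assoc_eval_from_continuous (A Rr : (nat -> answer) -> nat -> answer) n K j :
  (forall i, data_continuous (fun d => A d i)) -> (forall i, data_continuous (fun d => Rr d i)) ->
  data_continuous (fun d => assoc_eval_from (A d) (Rr d) n K j).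
Proof.
  intros HA HR. induction j; simpl; data_continuous_tac; auto.
  - apply read_prefix_from_continuous; auto.
  - match goal with |- data_continuous (fun _ => if ?b then _ else _) => destruct b end;
      data_continuous_tac; auto.
Qed.

(** * Stage programs and the associates they define *)

Definition finite_data (l : list bool) : nat -> answer :=
  fun i => match nth_error l i with Some b => Some (Some b) | None => Some None end.
Definition partial_data (l : list bool) : nat -> answer :=
  fun i => match nth_error l i with Some b => Some (Some b) | None => None end.
Definition total_data (f : nat -> bool) : nat -> answer := fun i => Some (Some (f i)).

Lemma finite_data_defined l i : finite_data l i <> None.
Proof. unfold finite_data. destruct (nth_error l i); discriminate. Qed.

Lemma total_data_defined f i : total_data f i <> None.
Proof. discriminate. Qed.

Lemma total_data_sound f : sound (total_data f) f.
Proof. intros i x H. unfold total_data in H. congruence. Qed.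

Lemma finite_data_prefix (q : nat -> bool) k i :
  i < k -> finite_data (prefix q k) i = Some (Some (q i)).
Proof.
  intros Hi. unfold finite_data. rewrite nth_error_prefix. apply Nat.ltb_lt in Hi. now rewrite Hi.
Qed.

Lemma finite_data_prefix_sound (q : nat -> bool) k : sound (finite_data (prefix q k)) q.
Proof.
  intros i x H. unfold finite_data in H. rewrite nth_error_prefix in H.
  destruct (i <? k); congruence.
Qed.

Lemma partial_data_prefix_refines (q : nat -> bool) k :
  refines (partial_data (prefix q k)) (total_data q).
Proof.
  intros i x H. unfold partial_data, total_data in *. rewrite nth_error_prefix in H.
  destruct (i <? k); congruence.
Qed.

Lemma partial_data_prefix (q : nat -> bool) k i :
  i < k -> partial_data (prefix q k) i = total_data q i.
Proof.
  intros Hi. unfold partial_data. rewrite nth_error_prefix. apply Nat.ltb_lt in Hi. now rewrite Hi.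
Qed.

Definition query_index (N : nat) : nat := unpair1 N.
Definition query_prefix_code (N : nat) : nat := unpair1 (unpair2 N).
Definition query_bit (N : nat) : bool := unpair2 (unpair2 N) =? 1.

Lemma query_prefix_code_qcode n l b : query_prefix_code (qcode n l b) = lcode l.
Proof. unfold query_prefix_code, qcode. rewrite unpair2_cpair. apply unpair1_cpair. Qed.

Lemma query_qcode n l b : query_index (qcode n l b) = n /\
  ldecode (query_prefix_code (qcode n l b)) = l /\ query_bit (qcode n l b) = b.
Proof.
  rewrite query_prefix_code_qcode, ldecode_lcode. unfold query_index, query_bit, qcode.
  rewrite unpair1_cpair, !unpair2_cpair. destruct b; auto.
Qed.

(* From partial data [d] on an associate [p] and a finite prefix [l] of an input, a stage
   program computes bit [n] of an output; [prog_assoc ob p] is the associate mapping each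
   input to that output. *)
Definition stage_prog := (nat -> answer) -> nat -> list bool -> answer.

Definition prog_monotone (ob : stage_prog) :=
  forall d d' n l x, refines d d' -> ob d n l = Some x -> ob d' n l = Some x.

Definition prog_continuous (ob : stage_prog) := forall n l, data_continuous (fun d => ob d n l).

(* The answer to the query [N] (asking whether bit [query_index N] equals [query_bit N]
   on an input with prefix [ldecode (query_prefix_code N)]); giving up counts as "no". *)
Definition prog_query (ob : stage_prog) (d : nat -> answer) (N : nat) : option bool :=
  match ob d (query_index N) (ldecode (query_prefix_code N)) with
  | None => None
  | Some None => Some false
  | Some (Some b) => Some (Bool.eqb b (query_bit N))
  end.

Definition prog_assoc (ob : stage_prog) (p : nat -> bool) (N : nat) : bool :=
  match prog_query ob (total_data p) N with Some c => c | None => false end.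

(* The associate of [p |-> prog_assoc ob p]. *)
Definition prog_realizer (ob : stage_prog) (M : nat) : bool :=
  match prog_query ob (partial_data (ldecode (query_prefix_code M))) (query_index M) with
  | None => false
  | Some c => Bool.eqb c (query_bit M)
  end.

Lemma prog_realizer_app ob p : prog_monotone ob -> prog_continuous ob ->
  (forall n l, ob (total_data p) n l <> None) ->
  assoc_app (prog_realizer ob) p (prog_assoc ob p).
Proof.
  intros Hm Hc Hdef N.
  set (P := fun k => match prog_query ob (partial_data (prefix p k)) N with
                     | None => false | Some _ => true end).
  assert (Hfire : forall k, fires (prog_realizer ob) N p k = P k).
  { intros k. unfold fires, prog_realizer, P.
    destruct (query_qcode N (prefix p k) true) as [-> [-> ->]].
    destruct (query_qcode N (prefix p k) false) as [-> [-> ->]].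
    destruct (prog_query ob _ N) as [[]|]; reflexivity. }
  assert (HB : exists B, P B = true).
  { assert (Hq : data_continuous (fun d => prog_query ob d N))
      by (unfold prog_query; data_continuous_tac; apply Hc).
    destruct (Hq (total_data p)) as [B HB]. exists B. unfold P.
    rewrite HB by (intros; apply partial_data_prefix; auto).
    unfold prog_query. specialize (Hdef (query_index N) (ldecode (query_prefix_code N))).
    destruct (ob (total_data p) _ _) as [[]|]; congruence. }
  destruct HB as [B HB]. destruct (bsearch_first P B HB) as [k [Hk Hmin]].
  exists k. split; [|split].
  - rewrite Hfire. auto.
  - intros. rewrite Hfire. auto.
  - unfold prog_realizer. destruct (query_qcode N (prefix p k) true) as [-> [-> ->]].
    unfold P in Hk. destruct (prog_query ob _ N) as [c|] eqn:E; try discriminate.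
    unfold prog_assoc, prog_query in *.
    destruct (ob (partial_data (prefix p k)) _ _) as [x|] eqn:Eob; try discriminate.
    rewrite (Hm _ _ _ _ _ (partial_data_prefix_refines p k) Eob).
    destruct x as [b|]; inversion E; subst; [destruct b, (query_bit N)|]; reflexivity.
Qed.

Lemma assoc_app_of_stages (O q s : nat -> bool) (F : nat -> nat -> answer) :
  (forall n k b, O (qcode n (prefix q k) b) =
                 match F n k with Some (Some v) => Bool.eqb v b | _ => false end) ->
  (forall n, exists k, F n k = Some (Some (s n))) ->
  (forall n k v, F n k = Some (Some v) -> v = s n) ->
  assoc_app O q s.
Proof.
  intros HO Hex Hs n.
  set (P := fun k => match F n k with Some (Some _) => true | _ => false end).
  assert (Hfire : forall k, fires O n q k = P k).
  { intros k. unfold fires, P. rewrite !HO. destruct (F n k) as [[[]|]|]; reflexivity. }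
  destruct (Hex n) as [k0 Hk0].
  assert (HP : P k0 = true) by (unfold P; rewrite Hk0; reflexivity).
  destruct (bsearch_first P k0 HP) as [k [Hk Hmin]].
  exists k. split; [|split].
  - rewrite Hfire. auto.
  - intros. rewrite Hfire. auto.
  - rewrite HO. unfold P in Hk. destruct (F n k) as [[v|]|] eqn:E; try discriminate.
    rewrite (Hs _ _ _ E). destruct (s n); reflexivity.
Qed.

Lemma eventually_all_below (P : nat -> nat -> Prop) L :
  (forall i, i < L -> exists ki, forall k, ki <= k -> P i k) ->
  exists k0, forall k, k0 <= k -> forall i, i < L -> P i k.
Proof.
  induction L; intros H. exists 0. intros; lia.
  destruct IHL as [k1 H1]. intros; apply H; lia.
  destruct (H L ltac:(lia)) as [k2 H2]. exists (max k1 k2). intros k Hk i Hi.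
  destruct (Nat.eq_dec i L). subst; apply H2; lia. apply H1; lia.
Qed.

Lemma eventually_all_queries (P : nat -> nat -> Prop) n (q : nat -> bool) kf :
  (forall j, exists kj, forall k, kj <= k -> P j k) ->
  exists k0, forall k, k0 <= k -> forall k' c, k' <= kf -> P (qcode n (prefix q k') c) k.
Proof.
  intros H.
  destruct (eventually_all_below
              (fun i k => P (qcode n (prefix q i) true) k /\ P (qcode n (prefix q i) false) k)
              (S kf)) as [k0 Hk0].
  { intros i _. destruct (H (qcode n (prefix q i) true)) as [a Ha].
    destruct (H (qcode n (prefix q i) false)) as [b Hb].
    exists (max a b). intros; split; [apply Ha|apply Hb]; lia. }
  exists k0. intros k Hk k' c Hk'. destruct (Hk0 k Hk k' ltac:(lia)). destruct c; auto.
Qed.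

Lemma assoc_eval_eventually (p q s : nat -> bool) j : assoc_app p q s ->
  exists kj, forall k, kj <= k ->
    assoc_eval (total_data p) (finite_data (prefix q k)) j k = Some (Some (s j)).
Proof.
  intros H. destruct (assoc_app_first_fire p q s j H) as [kf [Hf _]]. exists (S kf). intros k Hk.
  apply (assoc_eval_complete _ _ p q s j k kf H Hf). lia.
  - intros; apply finite_data_prefix; lia.
  - reflexivity.
Qed.

Lemma assoc_eval_prefix_sound (p q s : nat -> bool) k : assoc_app p q s ->
  sound (fun j => assoc_eval (total_data p) (finite_data (prefix q k)) j k) s.
Proof.
  intros H j x Hx. eapply assoc_eval_sound; eauto.
  apply total_data_sound. apply finite_data_prefix_sound.
Qed.

Lemma prog_assoc_qcode ob p n l b : prog_assoc ob p (qcode n l b) =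
  match ob (total_data p) n l with Some (Some v) => Bool.eqb v b | _ => false end.
Proof.
  unfold prog_assoc, prog_query. destruct (query_qcode n l b) as [-> [-> ->]].
  destruct (ob _ n l) as [[]|]; reflexivity.
Qed.

(* Applies the associate computed by [d] from the input prefix [l] to the name [i]. *)
Definition eval_at_prog (i : nat -> bool) : stage_prog := fun d n l =>
  assoc_eval (fun j => assoc_eval d (finite_data l) j (length l)) (total_data i) n (length l).

(* When [m] realizes [d] on [C(S, S)] and [r] names [y], [kappa_assoc m r] is an associate
   of [U |-> dU y]: a query on a prefix [lu] of a name of [U] applies the part of the
   associate of [dU] that [m] computes from [lu] to a prefix of [r]. *)
Definition kappa_bit (m : nat -> bool) (N : nat) (lr : list bool) : bool :=
  let lu := ldecode (query_prefix_code N) in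
  match assoc_eval (fun j => assoc_eval (total_data m) (finite_data lu) j (length lu))
                   (finite_data lr) (query_index N) (length lu) with
  | Some (Some v) => Bool.eqb v (query_bit N)
  | _ => false
  end.

Definition kappa_assoc (m r : nat -> bool) (N : nat) : bool :=
  kappa_bit m N (prefix r (length (ldecode (query_prefix_code N)))).

Definition kappa_prog (m : nat -> bool) : stage_prog := fun d N l =>
  match read_prefix (fun i => assoc_eval d (finite_data l) i (length l))
                    (length (ldecode (query_prefix_code N))) with
  | None => None
  | Some None => Some None
  | Some (Some lr) => Some (Some (kappa_bit m N lr))
  end.

Lemma eval_at_prog_monotone i : prog_monotone (eval_at_prog i).
Proof.
  intros d d' n l x Hd H. eapply assoc_eval_from_refines; [| |exact H]; [|intros ? ? ?; auto].
  intros j y Hj. eapply assoc_eval_from_refines; eauto. intros ? ? ?; auto.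
Qed.

Lemma eval_at_prog_continuous i : prog_continuous (eval_at_prog i).
Proof.
  intros n l. apply (assoc_eval_from_continuous (fun d j => assoc_eval d (finite_data l) j _)).
  - intros j. apply (assoc_eval_from_continuous (fun d => d)); data_continuous_tac.
  - data_continuous_tac.
Qed.

Lemma eval_at_prog_defined i p n l : eval_at_prog i (total_data p) n l <> None.
Proof.
  apply assoc_eval_from_defined; [intros j; apply assoc_eval_from_defined|];
    auto using total_data_defined, finite_data_defined.
Qed.

Lemma kappa_prog_monotone m : prog_monotone (kappa_prog m).
Proof.
  intros d d' N l x Hd H. unfold kappa_prog, read_prefix in *.
  destruct (read_prefix_from _ _ _) as [y|] eqn:E; try discriminate.
  erewrite read_prefix_from_refines; [exact H| |exact E].
  intros i z Hz. eapply assoc_eval_from_refines; eauto. intros ? ? ?; auto.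
Qed.

Lemma kappa_prog_continuous m : prog_continuous (kappa_prog m).
Proof.
  intros N l. unfold kappa_prog. data_continuous_tac.
  apply (read_prefix_from_continuous (fun d i => assoc_eval d (finite_data l) i _)).
  intros i. apply (assoc_eval_from_continuous (fun d => d)); data_continuous_tac.
Qed.

Lemma kappa_prog_defined m p N l : kappa_prog m (total_data p) N l <> None.
Proof.
  unfold kappa_prog, read_prefix.
  match goal with |- context [read_prefix_from ?r ?k ?j] =>
    pose proof (read_prefix_from_defined r k j) as H end.
  destruct (read_prefix_from _ _ _) as [[]|]; try discriminate.
  exfalso. apply H; auto. intros. apply assoc_eval_from_defined.
  apply total_data_defined. apply finite_data_defined.
Qed.

Lemma eval_at_prog_app i p q w s : assoc_app p q w -> assoc_app w i s ->
  assoc_app (prog_assoc (eval_at_prog i) p) q s.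
Proof.
  intros Hw Hs.
  apply (assoc_app_of_stages _ q s (fun n k => eval_at_prog i (total_data p) n (prefix q k))).
  - intros. apply prog_assoc_qcode.
  - intros n. destruct (assoc_app_first_fire w i s n Hs) as [kf [Hf _]].
    destruct (eventually_all_queries
                (fun j k => assoc_eval (total_data p) (finite_data (prefix q k)) j k = Some (Some (w j)))
                n i kf) as [k0 Hk0].
    { intros j. apply assoc_eval_eventually; auto. }
    exists (max k0 (S kf)). unfold eval_at_prog. rewrite length_prefix.
    apply (assoc_eval_complete _ _ w i s n _ kf Hs Hf). lia. reflexivity.
    intros k' c Hk'. apply Hk0; auto. lia.
  - intros n k v H. unfold eval_at_prog in H. rewrite length_prefix in H.
    eapply assoc_eval_sound; [| |exact Hs|exact H].
    apply assoc_eval_prefix_sound; auto. apply total_data_sound.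
Qed.

Lemma kappa_prog_app m p q r : assoc_app p q r ->
  assoc_app (prog_assoc (kappa_prog m) p) q (kappa_assoc m r).
Proof.
  intros Hr.
  apply (assoc_app_of_stages _ q _ (fun N k => kappa_prog m (total_data p) N (prefix q k))).
  - intros. apply prog_assoc_qcode.
  - intros N. set (L := length (ldecode (query_prefix_code N))).
    destruct (eventually_all_below
                (fun i k => assoc_eval (total_data p) (finite_data (prefix q k)) i k = Some (Some (r i)))
                L) as [k0 Hk0].
    { intros i _. apply assoc_eval_eventually; auto. }
    exists k0. unfold kappa_prog. fold L. rewrite length_prefix.
    rewrite (read_prefix_total _ L r) by (intros; apply Hk0; auto). reflexivity.
  - intros N k v H. unfold kappa_prog in H. rewrite length_prefix in H.
    destruct (read_prefix _ _) as [[lr|]|] eqn:E; try discriminate.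
    apply read_prefix_sound with (f := r) in E. 2: apply assoc_eval_prefix_sound; auto.
    inversion H; subst. reflexivity.
Qed.

Lemma kappa_assoc_app m u a r s : assoc_app m u a -> assoc_app a r s ->
  assoc_app (kappa_assoc m r) u s.
Proof.
  intros Ha Hs.
  apply (assoc_app_of_stages _ u s (fun n k =>
    assoc_eval (fun j => assoc_eval (total_data m) (finite_data (prefix u k)) j k)
               (finite_data (prefix r k)) n k)).
  - intros n k b. unfold kappa_assoc, kappa_bit.
    destruct (query_qcode n (prefix u k) b) as [-> [-> ->]]. rewrite length_prefix. reflexivity.
  - intros n. destruct (assoc_app_first_fire a r s n Hs) as [kf [Hf _]].
    destruct (eventually_all_queries
                (fun j k => assoc_eval (total_data m) (finite_data (prefix u k)) j k = Some (Some (a j)))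
                n r kf) as [k0 Hk0].
    { intros j. apply assoc_eval_eventually; auto. }
    exists (max k0 (S kf)).
    apply (assoc_eval_complete _ _ a r s n _ kf Hs Hf). lia.
    intros; apply finite_data_prefix; lia.
    intros k' c Hk'. apply Hk0; auto. lia.
  - intros n k v H. eapply assoc_eval_sound; [| |exact Hs|exact H].
    apply assoc_eval_prefix_sound; auto. apply finite_data_prefix_sound.
Qed.

(* The query for bit [n] is answered, by that bit, as soon as the prefix read has length
   [n + 1]. *)
Definition id_assoc (M : nat) : bool :=
  (query_index M <? lcode_length (query_prefix_code M)) &&
  Bool.eqb (lcode_nth (query_prefix_code M) (query_index M) =? 1) (query_bit M).

Lemma id_assoc_app q : assoc_app id_assoc q q.
Proof.
  assert (E : forall n k c, id_assoc (qcode n (prefix q k) c) = (n <? k) && Bool.eqb (q n) c).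
  { intros n k c. unfold id_assoc. destruct (query_qcode n (prefix q k) c) as [-> [_ ->]].
    rewrite query_prefix_code_qcode, lcode_length_lcode, length_prefix.
    destruct (Nat.ltb_spec n k); auto.
    rewrite lcode_nth_lcode by (rewrite length_prefix; auto).
    unfold prefix. rewrite (nth_indep _ false (q 0)) by (rewrite length_map, length_seq; auto).
    rewrite map_nth, seq_nth by auto. simpl. destruct (q n), c; reflexivity. }
  intros n. exists (S n). split; [|split].
  - unfold fires. rewrite !E, (proj2 (Nat.ltb_lt n (S n))) by lia. destruct (q n); reflexivity.
  - intros k' Hk'. unfold fires. rewrite !E. rewrite (proj2 (Nat.ltb_ge n k')) by lia. reflexivity.
  - rewrite E, (proj2 (Nat.ltb_lt n (S n))) by lia. destruct (q n); reflexivity.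
Qed.

(** * Stage programs are recursive *)

Definition answer_code (x : answer) : nat :=
  match x with None => 0 | Some None => 1 | Some (Some b) => 2 + b2n b end.

Definition prefix_answer_code (x : option (option (list bool))) : nat :=
  match x with None => 0 | Some None => 1 | Some (Some l) => 2 + lcode l end.

Definition case3 (x a b : nat) (f : nat -> nat) : nat :=
  match x with 0 => a | 1 => b | S (S y) => f y end.

Lemma rec_case3 n X A B (F : list nat -> nat -> nat) :
  recursive n X -> recursive n A -> recursive n B ->
  recursive (S n) (fun w => F (skipn 1 w) (nth 0 w 0)) ->
  recursive n (fun v => case3 (X v) (A v) (B v) (F v)).
Proof.
  intros HX HA HB HF. eapply rec_ext.
  - apply (rec_ifzf n X A (fun v => ifz (pred (X v)) (B v) (F v (X v - 2)))); auto.
    apply rec_ifzf; auto. apply (rec_comp1 n pred); auto. apply rec_pred.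
    apply (rec_cons_env 0 n _ (fun v => X v - 2) HF). apply rec_subf; auto. apply rec_const.
  - intros v _. unfold case3, ifz. destruct (X v) as [|[|y]]; simpl; auto.
    f_equal. lia.
Qed.

Definition recursive_data n (F : list nat -> nat -> answer) :=
  recursive (S n) (fun w => answer_code (F (skipn 1 w) (nth 0 w 0))).

Lemma rec_data_lift k n F : recursive_data n F -> recursive_data (k + n) (fun w => F (skipn k w)).
Proof.
  intros H. eapply rec_ext.
  - apply (rec_cons_env (S k) n _ (fun w => nth 0 w 0) H). apply rec_nth. lia.
  - intros [|x w] Hw; [discriminate|]. reflexivity.
Qed.

Lemma rec_data_at n F G : recursive_data n F -> recursive n G ->
  recursive n (fun v => answer_code (F v (G v))).
Proof. intros HF HG. exact (rec_cons_env 0 n _ G HF HG). Qed.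

Ltac by_skipn := intros ? ?; rewrite ?skipn_skipn, ?nth_skipn; reflexivity.

Definition read_prefix_step (rv : nat -> nat) (k j acc : nat) : nat :=
  case3 acc 0 1 (fun lc => case3 (rv (k - S j)) 0 1 (fun b => 2 + S (cpair b lc))).

Lemma read_prefix_from_code r k j : prefix_answer_code (read_prefix_from r k j) =
  natrec 2 (fun j acc => read_prefix_step (fun i => answer_code (r i)) k j acc) j.
Proof.
  induction j; simpl. reflexivity. rewrite <- IHj. unfold read_prefix_step.
  destruct (read_prefix_from r k j) as [[l|]|]; simpl; auto.
  destruct (r (k - S j)) as [[b|]|]; simpl; auto.
Qed.

Lemma rec_read_prefix n r k : recursive_data n r -> recursive n k ->
  recursive n (fun v => prefix_answer_code (read_prefix (r v) (k v))).
Proof.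
  intros Hr Hk. eapply rec_ext. 2:{ intros v _. symmetry. apply read_prefix_from_code. }
  apply (rec_natrec n k (fun _ => 2)
           (fun j acc v => read_prefix_step (fun i => answer_code (r v i)) (k v) j acc)); auto.
  apply rec_const. unfold read_prefix_step.
  apply (rec_case3 (2 + n) (fun w => nth 1 w 0) (fun _ => 0) (fun _ => 1)
    (fun w lc => case3 (answer_code (r (skipn 2 w) (k (skipn 2 w) - S (nth 0 w 0)))) 0 1
                       (fun b => 2 + S (cpair b lc)))).
  by_nth 1. apply rec_const. apply rec_const.
  eapply rec_ext; [apply (rec_case3 (3 + n)
      (fun w => answer_code (r (skipn 3 w) (k (skipn 3 w) - S (nth 1 w 0)))) (fun _ => 0) (fun _ => 1)
      (fun w b => 2 + S (cpair b (nth 0 w 0))))|by_skipn].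
  - apply (rec_data_at (3 + n) (fun w => r (skipn 3 w))). apply rec_data_lift; auto.
    apply rec_subf. apply (rec_lift 3 n k Hk). apply rec_S. by_nth 1.
  - apply rec_const.
  - apply rec_const.
  - apply rec_addf. apply rec_const. apply rec_S. apply rec_cpair. by_nth 0. by_nth 1.
Qed.

Definition fire_step (c1 c2 acc : nat) : nat :=
  case3 c1 0 1 (fun x1 => case3 c2 0 1 (fun x2 => if x1 + x2 =? 0 then acc else 2 + x1)).

Lemma rec_fire_step : recursive 3 (fun w => fire_step (nth 0 w 0) (nth 1 w 0) (nth 2 w 0)).
Proof.
  apply (rec_case3 3 (fun w => nth 0 w 0) (fun _ => 0) (fun _ => 1)
    (fun w x1 => case3 (nth 1 w 0) 0 1 (fun x2 => if x1 + x2 =? 0 then nth 2 w 0 else 2 + x1))).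
  by_nth 0. apply rec_const. apply rec_const.
  eapply rec_ext; [apply (rec_case3 4 (fun w => nth 2 w 0) (fun _ => 0) (fun _ => 1)
    (fun w x2 => if nth 0 w 0 + x2 =? 0 then nth 3 w 0 else 2 + nth 0 w 0))|by_skipn].
  - by_nth 2.
  - apply rec_const.
  - apply rec_const.
  - apply rec_if. apply rec_eqb. apply rec_addf; [by_nth 1 | by_nth 0]. apply rec_const.
    by_nth 4. apply rec_addf. apply rec_const. by_nth 1.
Qed.

Definition assoc_eval_step (av : nat -> nat) (n pc acc : nat) : nat :=
  case3 pc 0 1 (fun lc => fire_step (av (cpair n (cpair lc 1))) (av (cpair n (cpair lc 0))) acc).

Lemma assoc_eval_from_code a r n K j : answer_code (assoc_eval_from a r n K j) =
  natrec 1 (fun j acc => assoc_eval_step (fun i => answer_code (a i)) n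
                           (prefix_answer_code (read_prefix r (K - S j))) acc) j.
Proof.
  induction j; simpl. reflexivity. rewrite <- IHj. unfold assoc_eval_step, fire_step.
  destruct (read_prefix r (K - S j)) as [[l|]|]; simpl; auto.
  unfold qcode. destruct (a (cpair n (cpair (lcode l) 1))) as [[x1|]|]; simpl; auto.
  destruct (a (cpair n (cpair (lcode l) 0))) as [[x2|]|]; simpl; auto.
  destruct x1, x2; simpl; auto.
Qed.

Lemma rec_assoc_eval n a r N K :
  recursive_data n a -> recursive_data n r -> recursive n N -> recursive n K ->
  recursive n (fun v => answer_code (assoc_eval (a v) (r v) (N v) (K v))).
Proof.
  intros Ha Hr HN HK. eapply rec_ext. 2:{ intros v _. symmetry. apply assoc_eval_from_code. }
  apply (rec_natrec n K (fun _ => 1)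
    (fun j acc v => assoc_eval_step (fun i => answer_code (a v i)) (N v)
                      (prefix_answer_code (read_prefix (r v) (K v - S j))) acc)); auto.
  apply rec_const. unfold assoc_eval_step.
  apply (rec_case3 (2 + n)
    (fun w => prefix_answer_code (read_prefix (r (skipn 2 w)) (K (skipn 2 w) - S (nth 0 w 0))))
    (fun _ => 0) (fun _ => 1)
    (fun w lc => fire_step (answer_code (a (skipn 2 w) (cpair (N (skipn 2 w)) (cpair lc 1))))
                           (answer_code (a (skipn 2 w) (cpair (N (skipn 2 w)) (cpair lc 0))))
                           (nth 1 w 0))).
  - apply (rec_read_prefix (2 + n) (fun w => r (skipn 2 w))). apply rec_data_lift; auto.
    apply rec_subf. apply (rec_lift 2 n K HK). apply rec_S. by_nth 0.
  - apply rec_const.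
  - apply rec_const.
  - assert (Ha3 : recursive_data (3 + n) (fun w => a (skipn 3 w))) by (apply rec_data_lift; auto).
    assert (HN3 : recursive (3 + n) (fun w => N (skipn 3 w))) by apply (rec_lift 3 n N HN).
    eapply rec_ext; [apply (rec_comp3 (3 + n) fire_step
      (fun w => answer_code (a (skipn 3 w) (cpair (N (skipn 3 w)) (cpair (nth 0 w 0) 1))))
      (fun w => answer_code (a (skipn 3 w) (cpair (N (skipn 3 w)) (cpair (nth 0 w 0) 0))))
      (fun w => nth 2 w 0)) | by_skipn].
    + apply rec_fire_step.
    + apply (rec_data_at _ _ _ Ha3). apply rec_cpair; auto. apply rec_cpair. by_nth 0. apply rec_const.
    + apply (rec_data_at _ _ _ Ha3). apply rec_cpair; auto. apply rec_cpair. by_nth 0. apply rec_const.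
    + by_nth 2.
Qed.

Lemma rec_data_ldecode n c (x : answer) : recursive n c ->
  recursive_data n (fun v i => match nth_error (ldecode (c v)) i with
                               | Some b => Some (Some b) | None => x end).
Proof.
  intros Hc. eapply rec_ext.
  - apply (rec_if (S n) (fun w => nth 0 w 0 <? lcode_length (c (skipn 1 w)))
             (fun w => 2 + b2n (lcode_nth (c (skipn 1 w)) (nth 0 w 0) =? 1))
             (fun _ => answer_code x)).
    + apply rec_ltb. by_nth 0. apply rec_lcode_length, (rec_lift 1 n c Hc).
    + apply rec_addf. apply rec_const. apply rec_eqb1, rec_lcode_nth.
      apply (rec_lift 1 n c Hc). by_nth 0.
    + apply rec_const.
  - intros w _. rewrite nth_error_ldecode. destruct (_ <? _); reflexivity.
Qed.

Lemma rec_data_finite n c : recursive n c -> recursive_data n (fun v => finite_data (ldecode (c v))).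
Proof. apply rec_data_ldecode. Qed.

Lemma rec_data_partial n c : recursive n c -> recursive_data n (fun v => partial_data (ldecode (c v))).
Proof. apply rec_data_ldecode. Qed.

Lemma rec_data_total n (m : nat -> bool) :
  recursive 1 (fun w => b2n (m (nth 0 w 0))) -> recursive_data n (fun _ => total_data m).
Proof.
  intros Hm. apply (rec_addf (S n) (fun _ => 2)). apply rec_const.
  apply (rec_comp1 (S n) (fun x => b2n (m x))). exact Hm. apply rec_nth. lia.
Qed.

Lemma rec_data_assoc_eval n a r K : recursive_data n a -> recursive_data n r -> recursive n K ->
  recursive_data n (fun v j => assoc_eval (a v) (r v) j (K v)).
Proof.
  intros Ha Hr HK.
  apply (rec_assoc_eval (S n) (fun w => a (skipn 1 w)) (fun w => r (skipn 1 w)) (fun w => nth 0 w 0)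
           (fun w => K (skipn 1 w))).
  apply (rec_data_lift 1); auto. apply (rec_data_lift 1); auto. by_nth 0. apply (rec_lift 1 n K HK).
Qed.

Lemma rec_of_computable_seq m : computable_seq m -> recursive 1 (fun w => b2n (m (nth 0 w 0))).
Proof.
  intros [e He]. exists e. intros [|x [|]] H; simpl in H; try discriminate. apply He.
Qed.

Definition recursive_prog (ob : stage_prog) :=
  recursive 3 (fun w => answer_code (ob (partial_data (ldecode (nth 0 w 0))) (nth 1 w 0)
                                        (ldecode (nth 2 w 0)))).

Lemma rec_query_prefix_code n f : recursive n f -> recursive n (fun v => query_prefix_code (f v)).
Proof. intros. apply rec_unpair1, rec_unpair2; auto. Qed.

Lemma rec_query_index n f : recursive n f -> recursive n (fun v => query_index (f v)).
Proof. apply rec_unpair1. Qed.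

Lemma rec_query_bit n f : recursive n f -> recursive n (fun v => b2n (query_bit (f v))).
Proof. intros. apply rec_eqb1, rec_unpair2, rec_unpair2; auto. Qed.

Lemma prog_realizer_computable ob : recursive_prog ob -> computable_seq (prog_realizer ob).
Proof.
  intros Hob.
  assert (HM : recursive 1 (fun w => nth 0 w 0)) by (apply rec_nth; lia).
  assert (H : recursive 1 (fun w => b2n (prog_realizer ob (nth 0 w 0)))).
  { set (M := fun w : list nat => nth 0 w 0) in *.
    eapply rec_ext.
    - apply (rec_case3 1
        (fun w => answer_code (ob (partial_data (ldecode (query_prefix_code (M w))))
                                 (query_index (query_index (M w)))
                                 (ldecode (query_prefix_code (query_index (M w))))))
        (fun _ => 0) (fun w => b2n (0 =? b2n (query_bit (M w))))
        (fun w x => b2n (b2n (x =? b2n (query_bit (query_index (M w)))) =? b2n (query_bit (M w))))).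
      + apply (rec_comp3 1 (fun a b c => answer_code (ob (partial_data (ldecode a)) b (ldecode c))));
          [exact Hob|..].
        apply rec_query_prefix_code; auto. apply rec_query_index, rec_query_index; auto.
        apply rec_query_prefix_code, rec_query_index; auto.
      + apply rec_const.
      + apply rec_eqb. apply rec_const. apply rec_query_bit; auto.
      + apply rec_eqb. apply rec_eqb. by_nth 0.
        apply (rec_lift 1 1 (fun w => b2n (query_bit (query_index (M w))))).
        apply rec_query_bit, rec_query_index; auto.
        apply (rec_lift 1 1 (fun w => b2n (query_bit (M w)))). apply rec_query_bit; auto.
    - intros w _. unfold prog_realizer, prog_query, M.
      destruct (ob _ _ _) as [[[]|]|]; simpl;
        destruct (query_bit (query_index (nth 0 w 0))), (query_bit (nth 0 w 0)); reflexivity. }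
  destruct H as [e He]. exists e. intros n. specialize (He [n] eq_refl). simpl in He.
  destruct (prog_realizer ob n); exact He.
Qed.

Lemma rec_eval_at_prog i : recursive 1 (fun w => b2n (i (nth 0 w 0))) -> recursive_prog (eval_at_prog i).
Proof.
  intros Hi. eapply rec_ext.
  - apply (rec_assoc_eval 3
      (fun w j => assoc_eval (partial_data (ldecode (nth 0 w 0))) (finite_data (ldecode (nth 2 w 0)))
                             j (lcode_length (nth 2 w 0)))
      (fun _ => total_data i) (fun w => nth 1 w 0) (fun w => lcode_length (nth 2 w 0))).
    + apply rec_data_assoc_eval. apply rec_data_partial. by_nth 0.
      apply rec_data_finite. by_nth 2. apply rec_lcode_length. by_nth 2.
    + apply rec_data_total; auto.
    + by_nth 1.
    + apply rec_lcode_length. by_nth 2.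
  - intros w _. unfold eval_at_prog. rewrite length_ldecode. reflexivity.
Qed.

Lemma rec_kappa_bit m : recursive 1 (fun w => b2n (m (nth 0 w 0))) ->
  recursive 2 (fun w => b2n (kappa_bit m (nth 0 w 0) (ldecode (nth 1 w 0)))).
Proof.
  intros Hm. set (L := fun w : list nat => lcode_length (query_prefix_code (nth 0 w 0))).
  assert (HL : recursive 2 L) by (apply rec_lcode_length, rec_query_prefix_code; by_nth 0).
  eapply rec_ext.
  - apply (rec_case3 2
      (fun w => answer_code (assoc_eval
         (fun j => assoc_eval (total_data m) (finite_data (ldecode (query_prefix_code (nth 0 w 0))))
                              j (L w))
         (finite_data (ldecode (nth 1 w 0))) (query_index (nth 0 w 0)) (L w)))
      (fun _ => 0) (fun _ => 0) (fun w x => b2n (x =? b2n (query_bit (nth 0 w 0))))).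
    + apply rec_assoc_eval; auto. apply rec_data_assoc_eval; auto. apply rec_data_total; auto.
      apply rec_data_finite, rec_query_prefix_code. by_nth 0.
      apply rec_data_finite. by_nth 1. apply rec_query_index. by_nth 0.
    + apply rec_const.
    + apply rec_const.
    + apply rec_eqb. by_nth 0. apply rec_query_bit. by_nth 1.
  - intros w _. unfold kappa_bit, L. rewrite length_ldecode.
    destruct (assoc_eval _ _ _ _) as [[[]|]|]; simpl; auto; destruct (query_bit _); reflexivity.
Qed.

Lemma rec_kappa_prog m : recursive 1 (fun w => b2n (m (nth 0 w 0))) -> recursive_prog (kappa_prog m).
Proof.
  intros Hm. eapply rec_ext.
  - apply (rec_case3 3
      (fun w => prefix_answer_code (read_prefix
         (fun i => assoc_eval (partial_data (ldecode (nth 0 w 0))) (finite_data (ldecode (nth 2 w 0)))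
                              i (lcode_length (nth 2 w 0)))
         (lcode_length (query_prefix_code (nth 1 w 0)))))
      (fun _ => 0) (fun _ => 1) (fun w lc => 2 + b2n (kappa_bit m (nth 1 w 0) (ldecode lc)))).
    + apply (rec_read_prefix 3 (fun w i => assoc_eval (partial_data (ldecode (nth 0 w 0)))
               (finite_data (ldecode (nth 2 w 0))) i (lcode_length (nth 2 w 0)))).
      * apply rec_data_assoc_eval. apply rec_data_partial. by_nth 0. apply rec_data_finite. by_nth 2.
        apply rec_lcode_length. by_nth 2.
      * apply rec_lcode_length, rec_query_prefix_code. by_nth 1.
    + apply rec_const.
    + apply rec_const.
    + apply rec_addf. apply rec_const.
      apply (rec_comp2 4 (fun N c => b2n (kappa_bit m N (ldecode c)))).
      apply rec_kappa_bit; auto. by_nth 2. by_nth 0.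
  - intros w _. unfold kappa_prog. rewrite !length_ldecode.
    destruct (read_prefix _ _) as [[lr|]|]; simpl; auto.
    rewrite ldecode_lcode. destruct (kappa_bit _ _ _); reflexivity.
Qed.

Lemma rec_id_assoc : recursive 1 (fun w => b2n (id_assoc (nth 0 w 0))).
Proof.
  assert (HM : recursive 1 (fun w => nth 0 w 0)) by (apply rec_nth; lia).
  apply rec_andb.
  - apply rec_ltb. apply rec_query_index; auto. apply rec_lcode_length, rec_query_prefix_code; auto.
  - apply rec_beqb. apply rec_eqb1, rec_lcode_nth. apply rec_query_prefix_code; auto.
    apply rec_query_index; auto. apply rec_query_bit; auto.
Qed.

(** * Composition with kappa and evaluation at the identity *)

Lemma id_assoc_realizes (X : RepSpace) : realizes X X id_assoc (fun x => x).
Proof. intros q x Hq. exists q. split; auto. apply id_assoc_app. Qed.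

Definition id_cont (X : RepSpace) : cont X X :=
  exist _ (fun x => x) (ex_intro _ id_assoc (id_assoc_realizes X)).

Lemma cont_ext (X Y : RepSpace) (f g : cont X Y) :
  (forall x, proj1_sig f x = proj1_sig g x) -> f = g.
Proof.
  destruct f as [f cf], g as [g cg]. intros H.
  apply subset_eq_compat, functional_extensionality. exact H.
Qed.

Section Kappa.

Variable d : CompEndofunctor.
Variable m : nat -> bool.
Hypothesis m_realizes_dmap :
  realizes (Cspace Sier Sier) (Cspace (dobj d Sier) (dobj d Sier)) m (@dmap d Sier Sier).

Lemma kappa_assoc_realizes (r : nat -> bool) (y : dobj d Sier) : rep (dobj d Sier) r y ->
  realizes (Ospace Sier) (dobj d Sier) (kappa_assoc m r) (fun U => proj1_sig (dmap d U) y).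
Proof.
  intros Hy u U Hu. destruct (m_realizes_dmap u U Hu) as [a [Ha Hdu]].
  destruct (Hdu r y Hy) as [s [Hs Hsy]]. exists s. split; auto. eapply kappa_assoc_app; eauto.
Qed.

Lemma kappa_continuous (y : dobj d Sier) :
  continuous (Ospace Sier) (dobj d Sier) (fun U => proj1_sig (dmap d U) y).
Proof. destruct (rep_surj _ y) as [r Hr]. exists (kappa_assoc m r). apply kappa_assoc_realizes; auto. Qed.

Definition kappa (y : dobj d Sier) : kappa_obj d Sier :=
  exist _ (exist _ _ (kappa_continuous y)) (ex_intro _ y (fun U => eq_refl)).

Lemma kappa_at_id (z : kappa_obj d Sier) : kappa (proj1_sig (proj1_sig z) (id_cont Sier)) = z.
Proof.
  destruct z as [phi [y Hy]]. apply subset_eq_compat, cont_ext. intros U. simpl.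
  rewrite !Hy. f_equal. apply (dmap_id d (id_cont Sier)). reflexivity.
Qed.

Variable X : RepSpace.

Lemma compose_kappa_realizes (g : cont X (dobj d Sier)) p :
  realizes X (dobj d Sier) p (proj1_sig g) ->
  realizes X (kappa_obj d Sier) (prog_assoc (kappa_prog m) p) (fun x => kappa (proj1_sig g x)).
Proof.
  intros Hg q x Hq. destruct (Hg q x Hq) as [r [Hr Hy]]. exists (kappa_assoc m r). split.
  - apply kappa_prog_app; auto.
  - apply kappa_assoc_realizes; auto.
Qed.

Lemma compose_kappa_continuous (g : Od d X) :
  continuous X (kappa_obj d Sier) (fun x => kappa (proj1_sig g x)).
Proof. destruct (Cspace_surj g) as [p Hp]. eexists. apply compose_kappa_realizes, Hp. Qed.

Definition compose_kappa (g : Od d X) : Cspace X (kappa_obj d Sier) :=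
  exist _ _ (compose_kappa_continuous g).

Lemma eval_at_id_realizes (h : cont X (kappa_obj d Sier)) p :
  realizes X (kappa_obj d Sier) p (proj1_sig h) ->
  realizes X (dobj d Sier) (prog_assoc (eval_at_prog id_assoc) p)
    (fun x => proj1_sig (proj1_sig (proj1_sig h x)) (id_cont Sier)).
Proof.
  intros Hh q x Hq. destruct (Hh q x Hq) as [w [Hw Hwh]].
  destruct (Hwh id_assoc (id_cont Sier) (id_assoc_realizes Sier)) as [s [Hs Hsr]].
  exists s. split; auto. eapply eval_at_prog_app; eauto.
Qed.

Lemma eval_at_id_continuous (h : Cspace X (kappa_obj d Sier)) :
  continuous X (dobj d Sier) (fun x => proj1_sig (proj1_sig (proj1_sig h x)) (id_cont Sier)).
Proof. destruct (Cspace_surj h) as [p Hp]. eexists. apply eval_at_id_realizes, Hp. Qed.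

Definition eval_at_id (h : Cspace X (kappa_obj d Sier)) : Od d X :=
  exist _ _ (eval_at_id_continuous h).

Lemma compose_kappa_computable : computable_seq m ->
  computable (Od d X) (Cspace X (kappa_obj d Sier)) compose_kappa.
Proof.
  intros Hm. exists (prog_realizer (kappa_prog m)). split.
  - apply prog_realizer_computable, rec_kappa_prog, rec_of_computable_seq; auto.
  - intros p g Hg. exists (prog_assoc (kappa_prog m) p). split.
    + apply prog_realizer_app; auto using kappa_prog_monotone, kappa_prog_continuous, kappa_prog_defined.
    + apply compose_kappa_realizes. exact Hg.
Qed.

Lemma eval_at_id_computable : computable (Cspace X (kappa_obj d Sier)) (Od d X) eval_at_id.
Proof.
  exists (prog_realizer (eval_at_prog id_assoc)). split.
  - apply prog_realizer_computable, rec_eval_at_prog, rec_id_assoc.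
  - intros p h Hh. exists (prog_assoc (eval_at_prog id_assoc) p). split.
    + apply prog_realizer_app;
        auto using eval_at_prog_monotone, eval_at_prog_continuous, eval_at_prog_defined.
    + apply eval_at_id_realizes. exact Hh.
Qed.

End Kappa.

Theorem corollary9 (d : CompEndofunctor) (X : RepSpace) :
  exists (Phi : Od d X -> Cspace X (kappa_obj d Sier))
         (Psi : Cspace X (kappa_obj d Sier) -> Od d X),
    (forall (g : Od d X) (x : X) (U : Ospace Sier),
        proj1_sig (proj1_sig (proj1_sig (Phi g) x)) U
        = proj1_sig (dmap d U) (proj1_sig g x)) /\
    computable (Od d X) (Cspace X (kappa_obj d Sier)) Phi /\
    computable (Cspace X (kappa_obj d Sier)) (Od d X) Psi /\
    (forall g, Psi (Phi g) = g) /\ (forall h, Phi (Psi h) = h).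
Proof.
  destruct (dmap_computable d Sier Sier) as [m [Hm_comp Hm]].
  exists (compose_kappa d m Hm X), (eval_at_id d X).
  split; [|split; [|split; [|split]]].
  - reflexivity.
  - apply compose_kappa_computable; auto.
  - apply eval_at_id_computable.
  - intros g. apply cont_ext. intros x. apply (dmap_id d (id_cont Sier)). reflexivity.
  - intros h. apply cont_ext. intros x. apply kappa_at_id.
Qed.
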